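(* Fix $q\in V(G)$ and let $D\in\operatorname{Div}(G)$. Then $D$ is $q$-reduced if and only if $D\in|D|_q$ and $\mathcal{E}_q(D)<\mathcal{E}_q(D')$ for every $D'\in|D|_q$ with $D'\ne D$.
   Context: $G$ is a finite connected multigraph without loop edges, with vertex set $V(G)$ and edge set $E(G)$. A divisor is an element $D=\sum_{v}D(v)(v)$ of the free abelian group $\operatorname{Div}(G)$ on $V(G)$; $\deg(D)=\sum_vD(v)$. The Laplacian $\Delta$ sends a function $f:V(G)\to\mathbb{Q}$ to $\Delta(f)=\sum_v\Delta_v(f)(v)$ with $\Delta_v(f)=\sum_{\{v,w\}\in E(G)}(f(v)-f(w))$ (edges counted with multiplicity). $D_1\sim D_2$ means $D_1-D_2=\Delta(f)$ for some integer-valued $f$. For $q\in V(G)$, $|D|_q=\{E\in\operatorname{Div}(G): E\sim D,\ E(v)\ge 0\text{ for all }v\ne q\}$. For $A\subseteq V(G)$ and $v\in A$, $\operatorname{outdeg}_A(v)$ is the number of edges joining $v$ to $V(G)\setminus A$. A divisor $D$ is $q$-reduced if (i) $D(v)\ge 0$ for all $v\ne q$, and (ii) for every non-empty $A\subseteq V(G)\setminus\{q\}$ there is $v\in A$ with $D(v)<\operatorname{outdeg}_A(v)$. $Q$ is the Laplacian matrix with respect to a labeling of $V(G)$. For degree-zero divisors $D_1,D_2$, the energy pairing is $\langle D_1,D_2\rangle=[D_1]^TL[D_2]$ for any generalized inverse $L$ of $Q$ ($QLQ=Q$), independent of $L$. For divisors $D,E$, $\langle D,E\rangle_q=\langle D-\deg(D)(q),\,E-\deg(E)(q)\rangle$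 and $\mathcal{E}_q(D)=\langle D,D\rangle_q$. *)

From HB Require Import structures.
From mathcomp Require Import all_boot all_order all_algebra.
Set Implicit Arguments. Unset Strict Implicit. Unset Printing Implicit Defensive.
Import Order.TTheory GRing.Theory Num.Theory.
Local Open Scope ring_scope.

(* A loopless multigraph on vertex set 'I_n is given by an edge-multiplicity
   function m : 'I_n -> 'I_n -> nat (number of edges joining v and w). *)
Definition multigraph (n : nat) (m : 'I_n -> 'I_n -> nat) : Prop :=
  (forall v w, m v w = m w v) /\ (forall v, m v v = 0%N).

Definition adj (n : nat) (m : 'I_n -> 'I_n -> nat) : rel 'I_n :=
  fun v w => (0 < m v w)%N.

Definition connected_graph (n : nat) (m : 'I_n -> 'I_n -> nat) : Prop :=
  forall v w : 'I_n, connect (adj m) v w.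

Definition Div (n : nat) := {ffun 'I_n -> int}.

Definition degD (n : nat) (D : Div n) : int := \sum_v D v.

Definition pointD (n : nat) (q : 'I_n) (k : int) : Div n :=
  [ffun v => if v == q then k else 0].

Definition subD (n : nat) (D E : Div n) : Div n := [ffun v => D v - E v].

Definition laplacian_at (n : nat) (m : 'I_n -> 'I_n -> nat) (f : 'I_n -> int)
  (v : 'I_n) : int := \sum_w (m v w)%:Z * (f v - f w).

Definition lin_equiv (n : nat) (m : 'I_n -> 'I_n -> nat) (D1 D2 : Div n) : Prop :=
  exists f : 'I_n -> int, forall v, D1 v - D2 v = laplacian_at m f v.

Definition linsys (n : nat) (m : 'I_n -> 'I_n -> nat) (q : 'I_n) (D E : Div n) : Prop :=
  lin_equiv m E D /\ (forall v, v != q -> 0 <= E v).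

Definition outdeg (n : nat) (m : 'I_n -> 'I_n -> nat) (A : {set 'I_n}) (v : 'I_n) : nat :=
  (\sum_(w | w \notin A) m v w)%N.

Definition q_reduced (n : nat) (m : 'I_n -> 'I_n -> nat) (q : 'I_n) (D : Div n) : Prop :=
  (forall v, v != q -> 0 <= D v) /\
  (forall A : {set 'I_n}, A != set0 -> q \notin A ->
     exists2 v, v \in A & D v < (outdeg m A v)%:Z).

Definition laplacian_mx (n : nat) (m : 'I_n -> 'I_n -> nat) : 'M[rat]_n :=
  \matrix_(i, j) (if i == j then ((\sum_w m i w)%N)%:R else - (m i j)%:R).

(* A generalized inverse of Q (the energy pairing does not depend on the choice) *)
Definition gen_inv (n : nat) (m : 'I_n -> 'I_n -> nat) : 'M[rat]_n :=
  pinvmx (laplacian_mx m).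

Lemma gen_inv_spec (n : nat) (m : 'I_n -> 'I_n -> nat) :
  laplacian_mx m *m gen_inv m *m laplacian_mx m = laplacian_mx m.
Proof. by rewrite /gen_inv mulmxKpV // submx_refl. Qed.

Definition divvec (n : nat) (D : Div n) : 'cV[rat]_n := \col_i ((D i)%:~R).

Definition energy_pairing (n : nat) (m : 'I_n -> 'I_n -> nat) (D1 D2 : Div n) : rat :=
  ((divvec D1)^T *m gen_inv m *m divvec D2) ord0 ord0.

Definition pairing_q (n : nat) (m : 'I_n -> 'I_n -> nat) (q : 'I_n) (D E : Div n) : rat :=
  energy_pairing m (subD D (pointD q (degD D))) (subD E (pointD q (degD E))).

Definition energy_q (n : nat) (m : 'I_n -> 'I_n -> nat) (q : 'I_n) (D : Div n) : rat :=
  pairing_q m q D D.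

From HB Require Import structures.
From mathcomp Require Import all_boot all_order all_algebra.
From mathcomp Require Import ring zify.
Set Implicit Arguments. Unset Strict Implicit. Unset Printing Implicit Defensive.
Import Order.TTheory GRing.Theory Num.Theory.
Local Open Scope ring_scope.

(* For a degree-zero divisor x = Q g the energy x^T L x equals g^T Q g, the
   Dirichlet form of g, whatever generalized inverse L of Q is used.  Writing
   D~ := D - deg(D)(q), every D' ~ D has D'~ = D~ + Q h with h integral, hence
     E_q(D') - E_q(D) = 2 <D~, h> + h^T Q h                      (energy_shift),
   and h^T Q h = 1/2 sum_{v,w} m(v,w) (h v - h w)^2 is > 0 unless h is constant.  Then:
   - if D is q-reduced and D + Delta h is effective off q, then h attains its
     minimum at q (else Dhar's criterion fails on the minimal level set of h),
     so <D~, h> >= 0 and the energy strictly increases;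
   - if a set A not containing q violates reducedness, firing A (h = -1_A)
     produces a divisor of |D|_q with strictly smaller energy. *)

Section Dirichlet.
Variables (n : nat) (m : 'I_n -> 'I_n -> nat).
Hypothesis m_sym : forall v w, m v w = m w v.

Definition lapf (R : numDomainType) (f : 'I_n -> R) (v : 'I_n) : R :=
  \sum_w (m v w)%:R * (f v - f w).

Definition quadf (R : numDomainType) (f : 'I_n -> R) : R :=
  \sum_v f v * lapf f v.

Lemma lapf_sum (R : numDomainType) (f : 'I_n -> R) : \sum_v lapf f v = 0.
Proof.
rewrite /lapf.
under eq_bigr => v _ do (under eq_bigr => w _ do rewrite mulrBr; rewrite sumrB).
rewrite sumrB [X in _ - X]exchange_big /=; apply/eqP; rewrite subr_eq0; apply/eqP.
by apply: eq_bigr => v _; apply: eq_bigr => w _; rewrite m_sym.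
Qed.

Lemma quadf_sum_squares (R : numDomainType) (f : 'I_n -> R) :
  quadf f *+ 2 = \sum_v \sum_w (m v w)%:R * (f v - f w) ^+ 2.
Proof.
have half_sum : \sum_v \sum_w (m v w)%:R * (f v * (f v - f w)) = quadf f.
  by apply: eq_bigr => v _; rewrite /lapf mulr_sumr; apply: eq_bigr => w _; ring.
have swapped : \sum_v \sum_w (m v w)%:R * (f w * (f w - f v)) = quadf f.
  rewrite exchange_big -half_sum /=.
  by apply: eq_bigr => v _; apply: eq_bigr => w _; rewrite m_sym.
rewrite mulr2n -{1}half_sum -swapped -big_split /=.
apply: eq_bigr => v _; rewrite -big_split /=; apply: eq_bigr => w _.
rewrite -mulrDr; congr (_ * _); rewrite sqrrB; ring.
Qed.

Lemma quadf_ge0 (R : realDomainType) (f : 'I_n -> R) : 0 <= quadf f.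
Proof.
rewrite -(pmulrn_lge0 _ (isT : (0 < 2)%N)) quadf_sum_squares.
apply: sumr_ge0 => v _; apply: sumr_ge0 => w _.
by apply: mulr_ge0; [apply: ler0n | apply: sqr_ge0].
Qed.

Lemma quadf_eq0_adj (R : realDomainType) (f : 'I_n -> R) :
  quadf f = 0 -> forall v w, adj m v w -> f v = f w.
Proof.
move=> f0 v w vw.
have term_ge0 v' w' : 0 <= (m v' w')%:R * (f v' - f w') ^+ 2.
  by apply: mulr_ge0; [apply: ler0n | apply: sqr_ge0].
have sum0 : \sum_v \sum_w (m v w)%:R * (f v - f w) ^+ 2 = 0.
  by rewrite -quadf_sum_squares f0 mul0rn.
have row0 : \sum_w' (m v w')%:R * (f v - f w') ^+ 2 = 0.
  exact: (psumr_eq0P (fun v' _ => sumr_ge0 _ (fun w' _ => term_ge0 v' w')) sum0).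
move/eqP: (psumr_eq0P (fun w' _ => term_ge0 v w') row0 (i := w) isT).
rewrite mulf_eq0 pnatr_eq0 sqrf_eq0 subr_eq0.
by rewrite /adj lt0n in vw; rewrite (negbTE vw) => /eqP.
Qed.

Hypothesis m_conn : connected_graph m.

Lemma quadf_eq0_const (R : realDomainType) (f : 'I_n -> R) :
  quadf f = 0 -> forall v w, f v = f w.
Proof.
move=> f0 v w; move: (m_conn v w) => /connectP [p vp ->] {w}.
elim: p v vp => [|x p IH] v //= /andP [vx xp].
by rewrite (quadf_eq0_adj f0 vx) IH.
Qed.

Lemma quadf_gt0 (R : realDomainType) (f : 'I_n -> R) (v w : 'I_n) :
  f v != f w -> 0 < quadf f.
Proof.
move=> fvw; rewrite lt_neqAle quadf_ge0 andbT eq_sym.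
by apply: contra fvw => /eqP f0; rewrite (quadf_eq0_const f0 v w).
Qed.

End Dirichlet.

Lemma laplacian_atE (n : nat) (m : 'I_n -> 'I_n -> nat) (h : 'I_n -> int) v :
  laplacian_at m h v = lapf m h v.
Proof. by apply: eq_bigr => w _; rewrite natz. Qed.

Lemma lapf_intr (n : nat) (m : 'I_n -> 'I_n -> nat) (h : 'I_n -> int) v :
  ((lapf m h v)%:~R : rat) = lapf m (fun w => (h w)%:~R) v.
Proof.
rewrite /lapf rmorph_sum; apply: eq_bigr => w _.
by rewrite rmorphM rmorphB rmorph_nat.
Qed.

Lemma quadf_intr (n : nat) (m : 'I_n -> 'I_n -> nat) (h : 'I_n -> int) :
  ((quadf m h)%:~R : rat) = quadf m (fun w => (h w)%:~R).
Proof.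
rewrite /quadf rmorph_sum; apply: eq_bigr => w _.
by rewrite rmorphM; congr (_ * _); exact: lapf_intr.
Qed.

Section LaplacianMatrix.
Variables (n : nat) (m : 'I_n -> 'I_n -> nat).
Hypothesis m_graph : multigraph m.
Local Notation Q := (laplacian_mx m).

(* Entrywise form of Q; the diagonal term uses the absence of loops. *)
Lemma laplacian_mxE (i k : 'I_n) : Q i k = (i == k)%:R * (\sum_w m i w)%:R - (m i k)%:R.
Proof.
rewrite mxE; case: eqP => [<-|_]; last by rewrite mul0r sub0r.
by rewrite (proj2 m_graph) subr0 mul1r.
Qed.

Lemma laplacian_mx_sym : Q^T = Q.
Proof.
apply/matrixP => i j; rewrite !mxE eq_sym; case: eqP => [->|] //.
by rewrite (proj1 m_graph).
Qed.

Lemma laplacian_mx_col (f : 'I_n -> rat) : Q *m (\col_i f i) = \col_i lapf m f i.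
Proof.
apply/matrixP => i j; rewrite !mxE /lapf.
under eq_bigr => k _ do rewrite laplacian_mxE mxE mulrBl.
rewrite sumrB [X in X - _](bigD1 i) //= eqxx mul1r.
rewrite [X in _ + X - _]big1 ?addr0; last first.
  by move=> k ki; rewrite eq_sym (negbTE ki) !mul0r.
under [X in _ = X]eq_bigr => k _ do rewrite mulrBr.
by rewrite sumrB natr_sum mulr_suml.
Qed.

Lemma row_laplacian_mx (u : 'rV[rat]_n) : u *m Q = \row_i lapf m (fun j => u 0 j) i.
Proof.
apply: trmx_inj; rewrite trmx_mul laplacian_mx_sym.
have -> : u^T = \col_i u 0 i by apply/matrixP => i j; rewrite !mxE ord1.
by rewrite laplacian_mx_col; apply/matrixP => i j; rewrite !mxE.
Qed.

Lemma laplacian_mx_const : Q *m (const_mx 1 : 'cV[rat]_n) = 0.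
Proof.
have -> : (const_mx 1 : 'cV[rat]_n) = \col_i (fun _ => 1) i.
  by apply/matrixP => i j; rewrite !mxE.
rewrite laplacian_mx_col; apply/matrixP => i j; rewrite !mxE /lapf.
by rewrite big1 // => w _; rewrite subrr mulr0.
Qed.

Hypothesis m_conn : connected_graph m.

Lemma laplacian_ker_const : (kermx Q <= (const_mx 1 : 'rV[rat]_n))%MS.
Proof.
apply/row_subP => i; set u := row i (kermx Q).
have uQ : u *m Q = 0 by apply/sub_kermxP; exact: row_sub.
clearbody u.
have u_zero_energy : quadf m (fun j => u 0 j) = 0.
  rewrite /quadf big1 // => v _.
  by move/matrixP: uQ => /(_ 0 v); rewrite row_laplacian_mx !mxE => ->; rewrite mulr0.
have [j0 _ | no_vertex] := pickP (fun _ : 'I_n => true); last first.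
  have u0 : u = 0 by apply/rowP => j; have := no_vertex j.
  by rewrite u0 sub0mx.
have -> : u = u 0 j0 *: const_mx 1.
  apply/matrixP => a b; rewrite !mxE (ord1 a) mulr1.
  exact: (quadf_eq0_const (proj1 m_graph) m_conn u_zero_energy).
exact: scalemx_sub (submx_refl _).
Qed.

Lemma laplacian_rank : (n.-1 <= \rank Q)%N.
Proof.
have := mxrank_leqif_sup laplacian_ker_const; move/leq_of_leqif.
rewrite mxrank_ker => /leq_trans /(_ (rank_leq_row _)); lia.
Qed.

(* Every vector with zero coordinate sum lies in the image of Q: both spaces
   are contained in the hyperplane orthogonal to 1, which has dimension n - 1. *)
Lemma sum0_in_laplacian_image (x : 'cV[rat]_n) :
  \sum_i x i 0 = 0 -> exists g, x = Q *m g.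
Proof.
move=> x_sum0; pose S := kermx (const_mx 1 : 'cV[rat]_n).
have QS : (Q <= S)%MS by apply/sub_kermxP; exact: laplacian_mx_const.
have xS : (x^T <= S)%MS.
  apply/sub_kermxP; apply/matrixP => i j; rewrite !mxE ord1 -[RHS]x_sum0.
  by apply: eq_bigr => k _; rewrite !mxE mulr1.
have rankS : (\rank S <= \rank Q)%N.
  have [n0|n_gt0] := posnP n.
    by apply: leq_trans (rank_leq_row _) _; lia.
  have rank_const : \rank (const_mx 1 : 'cV[rat]_n) = 1%N.
    apply/eqP; rewrite eqn_leq rank_leq_col lt0n mxrank_eq0.
    apply/eqP => /matrixP /(_ (Ordinal n_gt0) 0).
    by rewrite !mxE => /eqP; rewrite oner_eq0.
  by rewrite /S mxrank_ker rank_const subn1 laplacian_rank.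
have SQ : (S <= Q)%MS.
  by rewrite -(mxrank_leqif_sup QS).2 eqn_leq rankS (mxrank_leqif_sup QS).1.
have [g xg] := submxP (submx_trans xS SQ); exists g^T.
by rewrite -laplacian_mx_sym -trmx_mul -xg trmxK.
Qed.

End LaplacianMatrix.

Section Energy.
Variables (n : nat) (m : 'I_n -> 'I_n -> nat).
Hypothesis m_graph : multigraph m.
Hypothesis m_conn : connected_graph m.
Local Notation Q := (laplacian_mx m).

Definition centered (q : 'I_n) (D : Div n) : Div n := subD D (pointD q (degD D)).

Lemma centered_sum (q : 'I_n) (D : Div n) : \sum_v centered q D v = 0.
Proof.
rewrite /centered /subD /pointD; under eq_bigr => v _ do rewrite !ffunE.
rewrite sumrB [X in _ - X](bigD1 q) //= eqxx.
by rewrite [X in _ - (_ + X)]big1 ?addr0 ?subrr // => v /negbTE ->.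
Qed.

Lemma centered_nonneg (q : 'I_n) (D : Div n) (v : 'I_n) :
  (forall w, w != q -> 0 <= D w) -> v != q -> 0 <= centered q D v.
Proof.
by move=> D_eff vq; rewrite /centered /subD /pointD !ffunE (negbTE vq) subr0 D_eff.
Qed.

Lemma gen_inv_energy (L0 : 'M[rat]_n) (g : 'cV[rat]_n) : Q *m L0 *m Q = Q ->
  (Q *m g)^T *m L0 *m (Q *m g) = g^T *m Q *m g.
Proof.
move=> L0_spec; rewrite trmx_mul (laplacian_mx_sym m_graph) !mulmxA.
by rewrite -(mulmxA _ Q L0) -(mulmxA _ (Q *m L0) Q) L0_spec.
Qed.

Lemma gen_inv_energy_shift (L0 : 'M[rat]_n) (g y : 'cV[rat]_n) :
  Q *m L0 *m Q = Q ->
  ((Q *m g + Q *m y)^T *m L0 *m (Q *m g + Q *m y)) 0 0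
    - ((Q *m g)^T *m L0 *m (Q *m g)) 0 0
  = ((Q *m g)^T *m y) 0 0 *+ 2 + (y^T *m Q *m y) 0 0.
Proof.
move=> L0_spec.
have QgT : (Q *m g)^T = g^T *m Q by rewrite trmx_mul (laplacian_mx_sym m_graph).
have cross_sym : (y^T *m Q *m g) 0 0 = (g^T *m Q *m y) 0 0.
  transitivity ((y^T *m Q *m g)^T 0 0); first by rewrite [RHS]mxE.
  by rewrite !trmx_mul trmxK (laplacian_mx_sym m_graph) mulmxA.
have entryD (A B : 'M[rat]_1) : (A + B) 0 0 = A 0 0 + B 0 0 by rewrite mxE.
rewrite -mulmxDr !gen_inv_energy // QgT [(g + y)^T]linearD /=.
by rewrite !mulmxDl !mulmxDr !entryD cross_sym; ring.
Qed.

Lemma energy_shift (q : 'I_n) (D D' : Div n) (h : 'I_n -> int) :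
  (forall v, D' v - D v = laplacian_at m h v) ->
  energy_q m q D' - energy_q m q D =
  ((\sum_v centered q D v * h v) *+ 2 + quadf m h)%:~R.
Proof.
move=> D'D.
have same_deg : degD D' = degD D.
  apply/eqP; rewrite -subr_eq0 /degD -sumrB.
  under eq_bigr => v _ do rewrite D'D laplacian_atE.
  by rewrite (lapf_sum (proj1 m_graph)).
pose x := divvec (centered q D); pose y : 'cV[rat]_n := \col_i (h i)%:~R.
have shift_vec : divvec (centered q D') = x + Q *m y.
  rewrite (laplacian_mx_col m_graph); apply/matrixP => i j.
  rewrite !mxE /centered /subD !ffunE same_deg -(lapf_intr m h).
  by rewrite -laplacian_atE -D'D -intrD; congr (_%:~R); ring.
have [g xg] : exists g, x = Q *m g.
  apply: (sum0_in_laplacian_image m_graph m_conn).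
  transitivity (((\sum_v centered q D v)%:~R) : rat); last by rewrite centered_sum.
  by rewrite rmorph_sum; apply: eq_bigr => i _; rewrite mxE.
rewrite /energy_q /pairing_q /energy_pairing -/(centered q D) -/(centered q D').
rewrite shift_vec -/x xg gen_inv_energy_shift ?gen_inv_spec // -xg.
rewrite rmorphD rmorphMn /= quadf_intr; congr (_ *+ 2 + _).
  by rewrite mxE rmorph_sum; apply: eq_bigr => k _; rewrite !mxE rmorphM.
rewrite -mulmxA (laplacian_mx_col m_graph) mxE.
by apply: eq_bigr => k _; rewrite !mxE.
Qed.

End Energy.

Section Firing.
Variables (n : nat) (m : 'I_n -> 'I_n -> nat).

Lemma outdeg_int (A : {set 'I_n}) (v : 'I_n) :
  (outdeg m A v)%:Z = \sum_(w | w \notin A) (m v w)%:Z.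
Proof. by rewrite /outdeg -natz natr_sum; apply: eq_bigr => w _; rewrite natz. Qed.

(* At a global minimum v of h, each edge leaving the level set of v
   contributes at least -1 to the Laplacian of h at v. *)
Lemma laplacian_at_min (h : 'I_n -> int) (v : 'I_n) : (forall w, h v <= h w) ->
  laplacian_at m h v <= - (outdeg m [set w | h w == h v] v)%:Z.
Proof.
move=> v_min; rewrite outdeg_int -sumrN /laplacian_at [X in _ <= X]big_mkcond /=.
apply: ler_sum => w _; rewrite inE; case: eqP => [->|hwv]; first by rewrite subrr mulr0.
have : h v < h w by rewrite lt_neqAle v_min andbT eq_sym; apply/eqP.
rewrite /=; nia.
Qed.

(* Otherwise the minimal level set
   of h avoids q, and every vertex of it would go into debt. *)
Lemma reduced_firing_min (q : 'I_n) (D D' : Div n) (h : 'I_n -> int) :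
  q_reduced m q D -> (forall v, v != q -> 0 <= D' v) ->
  (forall v, D' v - D v = laplacian_at m h v) -> forall v, h q <= h v.
Proof.
move=> [_ D_red] D'_eff D'D.
have [v0 _ v0_min] := @arg_minP _ _ _ q predT h isT.
suff -> : h q = h v0 by move=> v; exact: v0_min.
apply/eqP; rewrite eq_le (v0_min q isT) andbT leNgt; apply/negP => v0_lt_q.
set A := [set w | h w == h v0].
have A0 : A != set0 by apply/set0Pn; exists v0; rewrite inE.
have qA : q \notin A by rewrite inE gt_eqF.
have [v vA Dv] := D_red A A0 qA.
have hv : h v = h v0 by move: vA; rewrite inE => /eqP.
have vq : v != q by apply: contraNneq qA => <-.
have lap_v : laplacian_at m h v <= - (outdeg m A v)%:Z.
  by rewrite /A -hv; apply: laplacian_at_min => w; rewrite hv v0_min.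
by have := D'_eff v vq; rewrite -(subrK (D v) (D' v)) D'D; lia.
Qed.

(* When D is effective off q and h is minimal at q, the pairing of the
   centred divisor with h is nonnegative (h may be normalised by h q = 0). *)
Lemma centered_pairing_ge0 (q : 'I_n) (D : Div n) (h : 'I_n -> int) :
  (forall v, v != q -> 0 <= D v) -> (forall v, h q <= h v) ->
  0 <= \sum_v centered q D v * h v.
Proof.
move=> D_eff q_min.
have -> : \sum_v centered q D v * h v = \sum_v centered q D v * (h v - h q).
  under [RHS]eq_bigr => v _ do rewrite mulrBr.
  by rewrite sumrB -mulr_suml centered_sum mul0r subr0.
apply: sumr_ge0 => v _; have [->|vq] := eqVneq v q; first by rewrite subrr mulr0.
by rewrite mulr_ge0 ?subr_ge0 ?centered_nonneg.
Qed.

Definition fire_set (A : {set 'I_n}) (v : 'I_n) : int := if v \in A then -1 else 0.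

Lemma fire_set_in (A : {set 'I_n}) (v : 'I_n) :
  v \in A -> laplacian_at m (fire_set A) v = - (outdeg m A v)%:Z.
Proof.
move=> vA; rewrite outdeg_int -sumrN [RHS]big_mkcond /=; apply: eq_bigr => w _.
by rewrite /fire_set vA; case: (w \in A) => /=; rewrite ?subrr ?mulr0 ?subr0 ?mulrN1.
Qed.

Lemma fire_set_out (A : {set 'I_n}) (v : 'I_n) :
  v \notin A -> 0 <= laplacian_at m (fire_set A) v.
Proof.
move=> vA; apply: sumr_ge0 => w _; rewrite /fire_set (negbTE vA).
by apply: mulr_ge0 => //; case: (w \in A).
Qed.

Lemma linsys_self (q : 'I_n) (D : Div n) :
  (forall v, v != q -> 0 <= D v) -> linsys m q D D.
Proof.
split=> //; exists (fun _ => 0) => v.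
by rewrite subrr /laplacian_at big1 // => w _; rewrite subrr mulr0.
Qed.

End Firing.

Section EnergyMinimality.
Variables (n : nat) (m : 'I_n -> 'I_n -> nat).
Hypothesis m_graph : multigraph m.
Hypothesis m_conn : connected_graph m.

Lemma reduced_energy_min (q : 'I_n) (D D' : Div n) :
  q_reduced m q D -> linsys m q D D' -> D' != D -> energy_q m q D < energy_q m q D'.
Proof.
move=> D_red [[h D'D] D'_eff] D'_neq.
rewrite -subr_gt0 (energy_shift m_graph m_conn q D'D) ltr0z.
have pairing_ge0 : 0 <= \sum_v centered q D v * h v.
  exact: centered_pairing_ge0 D_red.1 (reduced_firing_min D_red D'_eff D'D).
have quad_pos : 0 < quadf m h.
  rewrite lt_neqAle (quadf_ge0 (proj1 m_graph)) andbT eq_sym.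
  apply: contra D'_neq => /eqP h0.
  apply/eqP/ffunP => v; apply/eqP; rewrite -subr_eq0 D'D /laplacian_at big1 // => w _.
  by rewrite (quadf_eq0_const (proj1 m_graph) m_conn h0 v w) subrr mulr0.
rewrite mulr2n; lia.
Qed.

Lemma energy_drop_of_violation (q : 'I_n) (D : Div n) (A : {set 'I_n}) :
  (forall v, v != q -> 0 <= D v) -> A != set0 -> q \notin A ->
  (forall v, v \in A -> (outdeg m A v)%:Z <= D v) ->
  exists2 D', linsys m q D D' & energy_q m q D' < energy_q m q D.
Proof.
move=> D_eff A0 qA A_rich; set h := fire_set A.
have notq v : v \in A -> v != q by move=> vA; apply: contraNneq qA => <-.
pose D' : Div n := [ffun v => D v + laplacian_at m h v].
have D'D v : D' v - D v = laplacian_at m h v by rewrite ffunE; ring.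
exists D'.
  split; first by exists h.
  move=> v vq; rewrite ffunE; have [vA|vA] := boolP (v \in A).
    by rewrite fire_set_in //; have := A_rich v vA; lia.
  by have := fire_set_out m vA; rewrite -/h; have := D_eff v vq; lia.
rewrite -subr_lt0 (energy_shift m_graph m_conn q D'D) ltrz0.
have pairing_le : \sum_v centered q D v * h v <= - quadf m h.
  rewrite /quadf -sumrN; apply: ler_sum => v _; rewrite -laplacian_atE.
  have [vA|vA] := boolP (v \in A); last first.
    by rewrite /h /fire_set (negbTE vA) !mulr0 mul0r oppr0.
  rewrite fire_set_in // /h /fire_set vA /centered /subD /pointD !ffunE.
  rewrite (negbTE (notq v vA)).
  by have := A_rich v vA; lia.
have [v0 v0A] := set0Pn _ A0.
have h_nonconst : h v0 != h q by rewrite /h /fire_set v0A (negbTE qA).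
have quad_pos : 0 < quadf m h := quadf_gt0 (proj1 m_graph) m_conn h_nonconst.
rewrite mulr2n; lia.
Qed.

End EnergyMinimality.

Theorem mainTheorem8 (n : nat) (m : 'I_n -> 'I_n -> nat)
  (Hg : multigraph m) (Hc : connected_graph m) (q : 'I_n) (D : Div n) :
  q_reduced m q D <->
  (linsys m q D D /\
   forall D' : Div n, linsys m q D D' -> D' != D -> energy_q m q D < energy_q m q D').
Proof.
split.
- move=> D_red; split; first exact: linsys_self D_red.1.
  by move=> D'; exact: reduced_energy_min.
- move=> [[_ D_eff] D_min]; split=> // A A0 qA.
  have [/exists_inP [v vA Dv] | no_poor] := boolP [exists v in A, D v < (outdeg m A v)%:Z].
    by exists v.
  have A_rich v : v \in A -> (outdeg m A v)%:Z <= D v.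
    by move=> vA; rewrite leNgt; apply: contraNN no_poor => Dv; apply/exists_inP; exists v.
  have [D' D'_lin D'_lt] := energy_drop_of_violation Hg Hc D_eff A0 qA A_rich.
  have [D'D|D'_neq] := eqVneq D' D; first by rewrite D'D ltxx in D'_lt.
  by have := D_min D' D'_lin D'_neq; rewrite ltNge (ltW D'_lt).
Qed.
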